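(* Let $n$ be a positive integer, let $\dot C_t$ be a colored chain on $t$ vertices, and let $\alpha=\alpha(\dot C_t)$. Then $$\tilde{R}(\dot C^{(rbr)}_{\alpha},Q_n)\le \tilde{R}(\dot C_t,Q_n)\le \tilde{R}(\dot C^{(rbr)}_{\alpha},Q_n)+t-\alpha.$$
   Context: A chain $C_t$ is a poset on $t$ pairwise comparable vertices; a colored chain has each vertex colored blue or red. The red-alternating chain $\dot C_a^{(rbr)}$ is $C_a$ colored alternately red and blue starting with a red minimal vertex; the blue-alternating chain $\dot C_a^{(brb)}$ is colored alternately starting with a blue minimal vertex. For a colored chain $\dot C$, $\alpha(\dot C)$ is the maximum $a$ such that $\dot C$ contains a copy of $\dot C_a^{(rbr)}$ or of $\dot C_a^{(brb)}$ (i.e. a subchain of $a$ vertices colored in that way). $Q_N$ is the Boolean lattice of all subsets of an $N$-element set ordered by inclusion. In a blue/red coloring of $Q_N$, a copy of a colored poset $\dot P$ is an induced subposet isomorphic to $P$ with matching colors. The poset Erdős–Hajnal number $\tilde{R}(\dot P,Q_n)$ is the minimum $N$ such that every blue/red coloring of $Q_N$ contains a copy of $\dot P$ or a monochromatic induced copy of $Q_n$. *)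

From Stdlib Require Import ClassicalEpsilon.
From mathcomp Require Import all_boot.
Set Implicit Arguments. Unset Strict Implicit. Unset Printing Implicit Defensive.

(* Colors: true = red, false = blue.
   A colored chain on t vertices is a  c : seq bool  of size t, listing the
   colors from the minimal vertex (head) to the maximal vertex (last). *)

Definition alt_chain (b : bool) (a : nat) : seq bool :=
  mkseq (fun i => if odd i then ~~ b else b) a.

Definition rbr (a : nat) : seq bool := alt_chain true a.
Definition brb (a : nat) : seq bool := alt_chain false a.

(* alpha(C): max a such that C contains a subchain colored as C_a^(rbr) or C_a^(brb).
   Subchains of a chain are exactly subsequences (subseq). *)
Definition alpha (c : seq bool) : nat :=
  \max_(a < (size c).+1 | subseq (rbr a) c || subseq (brb a) c) (a : nat).

(* Q_N = subsets of 'I_N ordered by inclusion; a blue/red coloring is a map to bool. *)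
Definition coloring (N : nat) := {set 'I_N} -> bool.

(* A copy of the colored chain c: a strictly increasing (by inclusion) sequence of
   subsets of the right length whose colors match c (any set of pairwise comparable
   distinct vertices induces a chain). *)
Definition has_chain_copy (N : nat) (col : coloring N) (c : seq bool) : Prop :=
  exists s : seq {set 'I_N},
    [/\ size s = size c, sorted (fun A B : {set 'I_N} => A \proper B) s & map col s = c].

(* A monochromatic induced copy of Q_n: an order embedding of Q_n into Q_N
   (f X ⊆ f Y iff X ⊆ Y) whose image is monochromatic. *)
Definition has_mono_Qn (N : nat) (col : coloring N) (n : nat) : Prop :=
  exists (f : {set 'I_n} -> {set 'I_N}) (b : bool),
    (forall X Y, (f X \subset f Y) = (X \subset Y)) /\ (forall X, col (f X) = b).

Definition EH_good (c : seq bool) (n N : nat) : Prop :=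
  forall col : coloring N, has_chain_copy col c \/ has_mono_Qn col n.

Definition EH_goodb (c : seq bool) (n N : nat) : bool :=
  if excluded_middle_informative (EH_good c n N) then true else false.

(* The poset Erdős–Hajnal number  R~(c, Q_n): the minimum N with EH_good
   (set to 0 by convention if no such N exists). *)
Definition EH_number (c : seq bool) (n : nat) : nat :=
  match excluded_middle_informative (exists N, EH_goodb c n N) with
  | left ex => ex_minn ex
  | right _ => 0
  end.

From Stdlib Require Import ClassicalEpsilon.
From mathcomp Require Import all_boot.
Set Implicit Arguments. Unset Strict Implicit. Unset Printing Implicit Defensive.

(* Lower bound: after merging runs of equal colors, a colored chain becomes an
   alternating chain on alpha vertices, which is a subchain of it; and swapping
   the two colors turns the blue-alternating chain into the red-alternating one.
   Upper bound: the chain is recovered from its alternating core by t - alpha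
   duplications of a vertex, and one duplication costs one extra dimension.
   Given a coloring of Q_(N+1) = Q_N x {0,1}, embed Q_N by sending X to its
   lower copy, or to its upper copy when the lower layer below X already holds
   a copy of the part of the chain up to the duplicated vertex.  This
   embedding is an order embedding, and a copy of the short chain in the
   induced coloring of Q_N yields a copy of the long chain in Q_(N+1). *)

Definition chain_copy (U : finType) (col : {set U} -> bool) (c : seq bool) :=
  exists2 s : seq {set U}, pairwise [rel A B : {set U} | A \proper B] s & map col s = c.

Definition mono_cube_copy (U : finType) (col : {set U} -> bool) (n : nat) :=
  exists (f : {set 'I_n} -> {set U}) (b : bool),
    (forall X Y, (f X \subset f Y) = (X \subset Y)) /\ (forall X, col (f X) = b).

Definition eh_good (c : seq bool) (n : nat) (U : finType) :=
  forall col : {set U} -> bool, chain_copy col c \/ mono_cube_copy col n.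

Lemma EH_goodE c n N : EH_good c n N <-> eh_good c n 'I_N.
Proof.
have proper_trans' : transitive [rel A B : {set 'I_N} | A \proper B].
  by move=> A B C; apply: proper_trans.
split=> good col.
  case: (good col) => [[s [_ s_chain s_col]]|mono]; last by right.
  by left; exists s; rewrite -?sorted_pairwise.
case: (good col) => [[s s_chain s_col]|mono]; last by right.
left; exists s; split=> //; first by rewrite -s_col size_map.
by rewrite sorted_pairwise.
Qed.

Section Transfer.

Variables (n : nat) (U V : finType).

Lemma eh_good_inj c (g : U -> V) : injective g -> eh_good c n U -> eh_good c n V.
Proof.
move=> g_inj good col.
pose G (X : {set U}) := g @: X.
have G_subset X Y : (G X \subset G Y) = (X \subset Y).
  apply/idP/idP; last exact: imsetS.
  move/subsetP=> sub; apply/subsetP=> x xX.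
  by have /imsetP[y yY /g_inj ->] := sub _ (imset_f g xX).
case: (good (col \o G)) => [[s s_chain s_col]|[f [b [f_emb f_col]]]].
  left; exists (map G s); last by rewrite -map_comp.
  rewrite pairwise_map; apply: sub_pairwise s_chain => X Y /=.
  by rewrite !properE !G_subset.
by right; exists (G \o f), b; split=> // X Y /=; rewrite G_subset.
Qed.

Lemma eh_good_leq_card c : #|U| <= #|V| -> eh_good c n U -> eh_good c n V.
Proof.
move=> le_UV; apply: (@eh_good_inj c (fun u => enum_val (widen_ord le_UV (enum_rank u)))).
by move=> x y /enum_val_inj /(congr1 val) /= /val_inj; apply: enum_rank_inj.
Qed.

End Transfer.

Section Colors.

Variables (n : nat) (U : finType).

Lemma eh_good_negb c : eh_good c n U -> eh_good (map negb c) n U.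
Proof.
move=> good col; case: (good (negb \o col)) => [[s s_chain s_col]|[f [b [f_emb f_col]]]].
  by left; exists s; rewrite // -s_col -map_comp; apply: eq_map => X /=; rewrite negbK.
by right; exists f, (~~ b); split=> // X; rewrite -(f_col X) negbK.
Qed.

Lemma eh_good_subseq c d : subseq d c -> eh_good c n U -> eh_good d n U.
Proof.
case/subseqP=> m size_m -> good col.
case: (good col) => [[s s_chain s_col]|mono]; last by right.
by left; exists (mask m s); rewrite ?pairwise_mask // map_mask s_col.
Qed.

End Colors.

Lemma map_eq_cat_cons (T1 T2 : Type) (f : T1 -> T2) s p b q :
  map f s = p ++ b :: q ->
  exists s1 x s2, [/\ s = s1 ++ x :: s2, map f s1 = p, f x = b & map f s2 = q].
Proof.
elim: p s => [|y p IH] [|z s] //= [fz fs].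
  by exists [::], z, s.
have [s1 [x [s2 [-> <- <- <-]]]] := IH _ fs.
by exists (z :: s1), x, s2; split=> //=; rewrite fz.
Qed.

Section Duplication.

Variable U : finType.
Implicit Types X Y : {set U}.

(* [option U] is [U] plus a new point [None]; [lift false X] and [lift true X]
   are the copies of [X] in the lower and the upper layer of its cube. *)
Definition lift (top : bool) (X : {set U}) : {set option U} :=
  [set o | if o is Some u then u \in X else top].

Lemma lift_subset t t' X Y :
  (lift t X \subset lift t' Y) = (t ==> t') && (X \subset Y).
Proof.
apply/subsetP/andP => [sub|[/implyP tt' /subsetP XY] [u|]]; rewrite ?inE.
- split; first by apply/implyP => t_; have := sub None; rewrite !inE; apply.
  by apply/subsetP=> x xX; have := sub (Some x); rewrite !inE; apply.
- exact: XY.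
- exact: tt'.
Qed.

Lemma lift_proper t X Y : (lift t X \proper lift t Y) = (X \proper Y).
Proof. by rewrite !properE !lift_subset implybb. Qed.

Lemma lift_proper_layer X Y : X \subset Y -> lift false X \proper lift true Y.
Proof. by move=> XY; rewrite properE !lift_subset XY. Qed.

Variables (col : {set option U} -> bool) (p : seq bool) (b : bool).

Definition low_copy (X : {set U}) :=
  exists2 W : seq {set U},
    pairwise [rel A B : {set U} | A \proper B] W /\ all (fun w : {set U} => w \subset X) W
    & map (col \o lift false) W = rcons p b.

Lemma low_copy_subset X Y : X \subset Y -> low_copy X -> low_copy Y.
Proof.
move=> XY [W [W_chain W_sub] W_col]; exists W => //; split=> //.
by apply: sub_all W_sub => w /subset_trans; apply.
Qed.

Definition low_copyb X : bool :=
  if excluded_middle_informative (low_copy X) then true else false.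

Lemma low_copybP X : reflect (low_copy X) (low_copyb X).
Proof. by rewrite /low_copyb; case: excluded_middle_informative => ?; constructor. Qed.

Definition lift_up X := lift (low_copyb X) X.

Lemma lift_up_subset X Y : (lift_up X \subset lift_up Y) = (X \subset Y).
Proof.
rewrite lift_subset; have [XY|] := boolP (X \subset Y); rewrite ?andbF ?andbT //.
by apply/implyP => /low_copybP /(low_copy_subset XY) /low_copybP.
Qed.

Section Pivot.

Variables (s1 : seq {set U}) (x : {set U}) (s2 : seq {set U}).
Hypotheses (s_chain : pairwise [rel A B : {set U} | A \proper B] (s1 ++ x :: s2))
           (s1_col : map (col \o lift_up) s1 = p) (x_col : col (lift_up x) = b).

Lemma s1_sub_pivot w : w \in s1 -> w \subset x.
Proof.
move: s_chain; rewrite pairwise_cat => /and3P[/allrelP below _ _] ws1.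
exact/proper_sub/below/mem_head.
Qed.

(* Either some vertex of s1 already sits in the upper layer, or the whole of
   rcons s1 x lies in the lower layer and is itself the required copy. *)
Lemma low_copy_pivot : low_copy x.
Proof.
have [//|no_copy] := excluded_middle_informative (low_copy x).
have s1_low w : w \in s1 -> low_copyb w = false.
  move=> ws1; apply/low_copybP => /(low_copy_subset (s1_sub_pivot ws1)).
  exact: no_copy.
exists (rcons s1 x); first split.
- move: s_chain; rewrite pairwise_cat pairwise_rcons /= => /and4P[x_above -> _ _].
  by rewrite andbT; apply: sub_all x_above => w /andP[].
- by rewrite all_rcons subxx; apply/allP => w; apply: s1_sub_pivot.
rewrite map_rcons -s1_col -x_col /= /lift_up.
have /negbTE -> : ~~ low_copyb x by apply/low_copybP.
by congr rcons; apply/eq_in_map => w /s1_low /= ->.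
Qed.

Lemma chain_copy_dup : chain_copy col (p ++ b :: b :: map (col \o lift_up) s2).
Proof.
have x_copy := low_copy_pivot; have [W [W_chain W_sub] W_col] := x_copy.
move: s_chain; rewrite pairwise_cat => /and3P[_ _ xs2_chain].
have above_x y : y \in x :: s2 -> x \subset y.
  case/predU1P => [->|ys2]; first exact: subxx.
  move: xs2_chain => /andP[/allP x_below _].
  exact/proper_sub/x_below.
have up_high y : y \in x :: s2 -> low_copyb y.
  by move=> /above_x xy; apply/low_copybP; apply: low_copy_subset xy x_copy.
exists (map (lift false) W ++ map (lift true) (x :: s2)).
  rewrite pairwise_cat !pairwise_map; apply/and3P; split.
  - apply/allrelP => _ _ /mapP[w wW ->] /mapP[y ys ->] /=.
    exact/lift_proper_layer/(subset_trans (allP W_sub w wW))/above_x.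
  - by apply: sub_pairwise W_chain => X Y /=; rewrite lift_proper.
  - by apply: sub_pairwise xs2_chain => X Y /=; rewrite lift_proper.
rewrite map_cat -!map_comp W_col cat_rcons; congr (_ ++ _ :: _); rewrite -x_col.
by apply/eq_in_map => y /up_high /= up_y; rewrite /lift_up up_y.
Qed.

End Pivot.

End Duplication.

Lemma eh_good_dup n (U : finType) p b q :
  eh_good (p ++ b :: q) n U -> eh_good (p ++ b :: b :: q) n (option U).
Proof.
move=> good col.
case: (good (col \o lift_up col p b)) => [[s s_chain s_col]|[f [b' [f_emb f_col]]]].
  have [s1 [x [s2 [s_eq s1_col x_col <-]]]] := map_eq_cat_cons s_col.
  by left; apply: chain_copy_dup s1_col x_col; rewrite -s_eq.
by right; exists (lift_up col p b \o f), b'; split=> // X Y /=; rewrite lift_up_subset.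
Qed.

Fixpoint compress (s : seq bool) : seq bool :=
  if s is x :: s' then
    if head (~~ x) s' == x then compress s' else x :: compress s'
  else [::].

Definition alternating (s : seq bool) := sorted (fun x y : bool => x != y) s.

Lemma compress_subseq s : subseq (compress s) s.
Proof.
elim: s => [|x s IH] //=; case: ifP => _; last by rewrite eqxx.
exact: subseq_trans IH (subseq_cons s x).
Qed.

Lemma head_compress x s : head x (compress s) = head x s.
Proof.
elim: s => [|y s IH] //=; case: ifP => // /eqP; rewrite IH.
by case: s {IH} => [|z s] /=; [case: y | move->].
Qed.

Lemma alternating_compress s : alternating (compress s).
Proof.
elim: s => [|x s IH] //=; case: ifP => // /negbT x_head.
rewrite -(head_compress (~~ x)) in x_head.
case: (compress s) IH x_head => [|y cs] //= cs_alt y_x.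
by rewrite cs_alt eq_sym y_x.
Qed.

Lemma alt_chainS e a : alt_chain e a.+1 = e :: alt_chain (~~ e) a.
Proof.
rewrite /alt_chain /mkseq /= -[1]addn0 iotaDl -map_comp; congr (_ :: _).
by apply: eq_map => i /=; case: (odd i); case: e.
Qed.

Lemma alternating_alt_chain e a : alternating (alt_chain e a).
Proof.
elim: a e => [|a IH] e //; rewrite alt_chainS.
by case: a IH => [|a] IH //; move: (IH (~~ e)); rewrite alt_chainS /= => ->; case: e.
Qed.

Lemma alternatingE s : alternating s -> s = alt_chain (head true s) (size s).
Proof.
elim: s => [|x s IH] //= s_alt; rewrite alt_chainS; congr (_ :: _).
case: s IH s_alt => [|y s] IH //= /andP[xy s_alt].
rewrite [LHS](IH s_alt); congr alt_chain.
by move: xy {IH s_alt}; case: x; case: y.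
Qed.

Lemma subseq_consE (T : eqType) (z x : T) s c :
  subseq (z :: s) (x :: c) = if z == x then subseq s c else subseq (z :: s) c.
Proof. by rewrite /=; case: eqP. Qed.

Lemma subseq_dup (s c : seq bool) x :
  alternating s -> subseq s (x :: x :: c) -> subseq s (x :: c).
Proof.
case: s => [|z s] // s_alt; rewrite !subseq_consE; case: eqP => // zx.
case: s s_alt => [|w s] s_alt; first by move=> _; apply: sub0seq.
have /andP[zw _] : (z != w) && path (fun x y : bool => x != y) w s := s_alt.
by rewrite subseq_consE -zx eq_sym (negbTE zw).
Qed.

Lemma subseq_compress c s : alternating s -> subseq s c -> subseq s (compress c).
Proof.
elim: c s => [|x c IH] s s_alt //; rewrite [compress _]/=; case: ifP => [/eqP|_].
  case: c IH => [|y c] IH; first by case: x.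
  move=> y_x; have {}y_x : y = x := y_x; subst y.
  by move=> /(subseq_dup s_alt); apply: IH.
case: s s_alt => [|z s] // s_alt; rewrite !subseq_consE; case: eqP => _; last exact: IH.
exact/IH/(path_sorted s_alt).
Qed.

Lemma alpha_compress c : alpha c = size (compress c).
Proof.
rewrite /alpha; apply/eqP; rewrite eqn_leq; apply/andP; split.
  have le_alt e a : subseq (alt_chain e a) c -> a <= size (compress c).
    move/(subseq_compress (alternating_alt_chain e a))/size_subseq.
    by rewrite size_mkseq.
  by apply/bigmax_leqP => a /orP[]; apply: le_alt.
have lt_c : size (compress c) < (size c).+1 by rewrite ltnS size_subseq // compress_subseq.
apply: (@leq_bigmax_cond _ _ (fun a : 'I_(size c).+1 => nat_of_ord a) (Ordinal lt_c)) => /=.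
have := compress_subseq c; rewrite {1}(alternatingE (alternating_compress c)).
by rewrite /rbr /brb; case: (head _ _) => ->; rewrite ?orbT.
Qed.

Lemma brb_negb a : brb a = map negb (rbr a).
Proof. by rewrite /brb /rbr /alt_chain /mkseq -map_comp; apply: eq_map => i /=; case: odd. Qed.

Lemma eh_good_compressE c n U : eh_good (compress c) n U <-> eh_good (rbr (alpha c)) n U.
Proof.
rewrite alpha_compress {1}(alternatingE (alternating_compress c)).
case: (head _ _); first by [].
rewrite -/(brb _) brb_negb; split; first by move/eh_good_negb; rewrite (mapK negbK).
exact: eh_good_negb.
Qed.

Lemma eh_good_decompress n c : forall p (U V : finType),
  eh_good (p ++ compress c) n U -> #|U| + (size c - size (compress c)) <= #|V| ->
  eh_good (p ++ c) n V.
Proof.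
elim: c => [|x s IH] p U V good le_UV.
  by apply: eh_good_leq_card good; rewrite addn0 in le_UV.
move: good le_UV; rewrite [compress _]/=; case: ifP => [x_head|_] good le_UV; last first.
  rewrite -cat_rcons; apply: IH; first by rewrite cat_rcons.
  by rewrite subSS in le_UV.
have le_s := size_subseq (compress_subseq s).
case: s IH le_s x_head good le_UV => [|y s] IH le_s; first by case: x.
move=> /eqP y_x; have {}y_x : y = x := y_x; subst y => good le_UV.
pose d := size (x :: s) - size (compress (x :: s)).
have /eh_good_dup : eh_good (p ++ x :: s) n 'I_(#|U| + d).
  by apply: IH good _; rewrite card_ord.
by apply: eh_good_leq_card; rewrite card_option card_ord -addnS -subSn.
Qed.

Lemma EH_good_rbr_alpha c n N : EH_good c n N -> EH_good (rbr (alpha c)) n N.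
Proof.
move/EH_goodE => good; apply/EH_goodE/eh_good_compressE.
exact: eh_good_subseq (compress_subseq c) good.
Qed.

Lemma EH_good_of_rbr_alpha c n M :
  EH_good (rbr (alpha c)) n M -> EH_good c n (M + (size c - alpha c)).
Proof.
move/EH_goodE/eh_good_compressE => good; apply/EH_goodE.
by apply: (@eh_good_decompress n c [::] 'I_M); rewrite // !card_ord alpha_compress.
Qed.

Section EHNumber.

Variables (c : seq bool) (n : nat).

Lemma EH_goodbP N : reflect (EH_good c n N) (EH_goodb c n N).
Proof. by rewrite /EH_goodb; case: excluded_middle_informative => ?; constructor. Qed.

Lemma EH_number_min N : EH_good c n N -> EH_number c n <= N /\ EH_good c n (EH_number c n).
Proof.
move=> good; rewrite /EH_number; case: excluded_middle_informative => [ex|[]].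
  case: ex_minnP => m good_m min_m; split; last exact/EH_goodbP.
  exact/min_m/EH_goodbP.
by exists N; apply/EH_goodbP.
Qed.

Lemma EH_number_eq0 : ~ (exists N, EH_good c n N) -> EH_number c n = 0.
Proof.
move=> none; rewrite /EH_number; case: excluded_middle_informative => // -[N good_N].
by case: none; exists N; apply/EH_goodbP.
Qed.

End EHNumber.

Lemma EH_number_leq c d n k :
  (forall N, EH_good c n N -> EH_good d n (N + k)) ->
  (forall N, EH_good d n N -> exists M, EH_good c n M) ->
  EH_number d n <= EH_number c n + k.
Proof.
move=> c_to_d d_to_c.
case: (excluded_middle_informative (exists N, EH_good c n N)) => [[N good_N]|none].
  have [_ good_min] := EH_number_min good_N.
  by have [] := EH_number_min (c_to_d _ good_min).
by rewrite (@EH_number_eq0 d) // => -[N /d_to_c].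
Qed.

Theorem theorem4 (n : nat) (c : seq bool) :
  0 < n ->
  EH_number (rbr (alpha c)) n <= EH_number c n /\
  EH_number c n <= EH_number (rbr (alpha c)) n + (size c - alpha c).
Proof.
move=> _; split.
  rewrite -[leqRHS]addn0; apply: EH_number_leq => N.
    by rewrite addn0; apply: EH_good_rbr_alpha.
  by move/EH_good_of_rbr_alpha; eexists.
apply: EH_number_leq => N; first exact: EH_good_of_rbr_alpha.
by move/EH_good_rbr_alpha; eexists.
Qed.
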